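(* Let $n,k_1,k_2$ be nonnegative integers with $k_1+k_2\le n$ and $\ell=n-k_1-k_2$. If $G\in\mathcal{U}$, then there is a matrix $G'\in\mathcal{V}$ such that the $\mathbb{Z}_4$-codes with generator matrices $G$ and $G'$ are equivalent.
   Context: $\mathbb{Z}_4=\{0,1,2,3\}$ is the ring of integers modulo $4$; a $\mathbb{Z}_4$-code of length $n$ is a submodule of $\mathbb{Z}_4^n$, and two codes are equivalent if one is obtained from the other by permuting coordinates and changing the signs of some coordinates. Order $\mathbb{Z}_4$ by $0<1<2<3$ and order vectors of $\mathbb{Z}_4^m$ lexicographically. Let $M_{m\times n}(R)$ denote the set of $m\times n$ matrices with entries in $R$. For $T\subset M_{m\times n}(\mathbb{Z}_4)$ let $P_{row}(T)$ be the set of matrices in $T$ whose rows $a_1,\dots,a_m$ satisfy $a_i\le a_j$ whenever $i\le j$, and $P_{col}(T)$ the set of matrices in $T$ whose columns $b_1,\dots,b_n$ satisfy $b_i^T\le b_j^T$ whenever $i\le j$. For $(0,1)$-matrices $A$ ($k_1\times k_2$), $D$ ($k_2\times\ell$) and a $\mathbb{Z}_4$-matrix $B$ ($k_1\times\ell$), let $G(A,B,D)=\begin{pmatrix} I_{k_1} & A & B\\ O & 2I_{k_2} & 2D\end{pmatrix}$. Let $\mathcal{S}=\{G(A,B,D)\mid A\in M_{k_1\times k_2}(\{0,1\}),\ B\in M_{k_1\times\ell}(\mathbb{Z}_4),\ D\in M_{k_2\times\ell}(\{0,1\})\}$, $\mathcal{T}=\{G(A,B,D)\in\mathcal{S}\mid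 A\in P_{row}(M_{k_1\times k_2}(\{0,1\}))\}$. Let $\mathcal{B}$ be the set consisting of all $k_1\times\ell$ matrices with entries in $\{0,2\}$ together with all $k_1\times\ell$ $\mathbb{Z}_4$-matrices $B$ such that, for the smallest $i$ for which the $i$-th row of $B$ contains an entry not in $\{0,2\}$, the $i$-th row of $B$ has all entries in $\{0,1,2\}$. Let $\mathcal{U}=\{G(A,B,D)\in\mathcal{T}\mid B\in\mathcal{B}\}$ and $\mathcal{V}=\{G(A,B,D)\in\mathcal{U}\mid \begin{pmatrix}B\\2D\end{pmatrix}\in P_{col}(M_{(k_1+k_2)\times\ell}(\mathbb{Z}_4))\}$. *)

From HB Require Import structures.
From mathcomp Require Import all_boot all_order all_algebra.
From mathcomp Require Import perm.
Set Implicit Arguments. Unset Strict Implicit. Unset Printing Implicit Defensive.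
Import GRing.Theory.
Local Open Scope ring_scope.

Notation Z4 := 'Z_4.

(* order 0<1<2<3 on Z4 via the underlying natural number *)
Definition z4nat (x : Z4) : nat := nat_of_ord x.

Fixpoint lex_le (s t : seq nat) : bool :=
  match s, t with
  | [::], _ => true
  | _ :: _, [::] => false
  | x :: s', y :: t' => (x < y)%N || ((x == y) && lex_le s' t')
  end.

Definition row_seq m n (M : 'M[Z4]_(m, n)) (i : 'I_m) : seq nat :=
  [seq z4nat (M i j) | j <- enum 'I_n].
Definition col_seq m n (M : 'M[Z4]_(m, n)) (j : 'I_n) : seq nat :=
  [seq z4nat (M i j) | i <- enum 'I_m].

Definition rows_sorted m n (M : 'M[Z4]_(m, n)) : Prop :=
  forall i j : 'I_m, (i <= j)%N -> lex_le (row_seq M i) (row_seq M j).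
Definition cols_sorted m n (M : 'M[Z4]_(m, n)) : Prop :=
  forall i j : 'I_n, (i <= j)%N -> lex_le (col_seq M i) (col_seq M j).

Definition is01 m n (M : 'M[Z4]_(m, n)) : Prop :=
  forall i j, M i j = 0 \/ M i j = 1.

Definition in02 (x : Z4) : bool := (x == 0) || (x == 2).

Definition inB m n (B : 'M[Z4]_(m, n)) : Prop :=
  (forall i j, in02 (B i j)) \/
  (exists i : 'I_m,
      (exists j, ~~ in02 (B i j)) /\
      (forall i' : 'I_m, (i' < i)%N -> forall j, in02 (B i' j)) /\
      (forall j, B i j != 3)).

Definition Gmat k1 k2 l (A : 'M[Z4]_(k1, k2)) (B : 'M[Z4]_(k1, l))
  (D : 'M[Z4]_(k2, l)) : 'M[Z4]_(k1 + k2, k1 + (k2 + l)) :=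
  col_mx (row_mx 1%:M (row_mx A B))
         (row_mx 0 (row_mx (2 *: 1%:M) (2 *: D))).

Definition code m N (G : 'M[Z4]_(m, N)) : {set 'rV[Z4]_N} :=
  [set x : 'rV[Z4]_N | [exists v : 'rV[Z4]_m, x == v *m G]].

Definition equiv_codes N (C1 C2 : {set 'rV[Z4]_N}) : Prop :=
  exists (s : 'S_N) (e : 'I_N -> bool),
    C2 = [set (\row_j ((-1) ^+ e j * x ord0 (s j)) : 'rV[Z4]_N) | x : 'rV[Z4]_N in C1].

Definition inU k1 k2 l (A : 'M[Z4]_(k1, k2)) (B : 'M[Z4]_(k1, l))
  (D : 'M[Z4]_(k2, l)) : Prop :=
  [/\ is01 A, is01 D, rows_sorted A & inB B].
Definition inV k1 k2 l (A : 'M[Z4]_(k1, k2)) (B : 'M[Z4]_(k1, l))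
  (D : 'M[Z4]_(k2, l)) : Prop :=
  inU A B D /\ cols_sorted (col_mx B (2 *: D)).

(* Sort the last l columns of G(A,B,D) lexicographically by a permutation s of
   their column vectors in (B; 2D).  The identity block and A are untouched, the
   conditions defining U only concern entries or rows of B, hence survive column
   permutations, and G(A, Bs, Ds) is G(A,B,D) with its coordinates permuted, so
   the two codes are equivalent without any sign change. *)

From mathcomp Require Import all_boot all_order all_algebra.
From mathcomp Require Import perm.
Set Implicit Arguments. Unset Strict Implicit. Unset Printing Implicit Defensive.
Import GRing.Theory.
Local Open Scope ring_scope.

Lemma lex_le_refl : reflexive lex_le.
Proof. by elim=> [|x s IH] //=; rewrite eqxx IH orbT. Qed.

Lemma lex_le_trans : transitive lex_le.
Proof.
move=> t s u; elim: s t u => [|x s IH] [|y t] [|z u] //=.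
move=> /orP[lt_yx|/andP[/eqP-> le_ts]] /orP[lt_xz|/andP[/eqP<- le_su]].
- by rewrite (ltn_trans lt_yx lt_xz).
- by rewrite lt_yx.
- by rewrite lt_xz.
- by rewrite eqxx (IH _ _ le_ts le_su) orbT.
Qed.

Lemma lex_le_total : total lex_le.
Proof.
elim=> [|x s IH] [|y t] //=.
by case: ltngtP => //= <-; rewrite eqxx IH orbT.
Qed.

Lemma sorting_perm (T : Type) (r : rel T) (l : nat) (f : 'I_l -> T) :
  reflexive r -> transitive r -> total r ->
  exists s : 'S_l, forall i j : 'I_l, (i <= j)%N -> r (f (s i)) (f (s j)).
Proof.
move=> r_refl r_trans r_total.
pose rf := [rel i j : 'I_l | r (f i) (f j)].
have rf_refl : reflexive rf by move=> i; apply: r_refl.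
have rf_trans : transitive rf by move=> i j k; apply: r_trans.
have /tuple_permP[s sortE] : perm_eq (sort rf (enum 'I_l)) (ord_tuple l).
  by rewrite perm_sort val_ord_tuple.
exists s => i j le_ij.
have sorted_rf : sorted rf [tuple tnth (ord_tuple l) (s i) | i < l].
  by rewrite -sortE; apply: sort_sorted => a b; apply: r_total.
have /(_ i j) := sorted_leq_nth rf_trans rf_refl i sorted_rf.
rewrite !nth_mktuple !tnth_ord_tuple.
by apply; rewrite // inE size_tuple.
Qed.

Lemma col_seq_col_perm m n (s : 'S_n) (M : 'M[Z4]_(m, n)) j :
  col_seq (col_perm s M) j = col_seq M (s j).
Proof. by apply: eq_map => i; rewrite mxE. Qed.

Lemma cols_sortable m n (M : 'M[Z4]_(m, n)) :
  exists s : 'S_n, cols_sorted (col_perm s M).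
Proof.
have [s sorted_s] := sorting_perm (col_seq M) lex_le_refl lex_le_trans lex_le_total.
by exists s => i j le_ij; rewrite !col_seq_col_perm; apply: sorted_s.
Qed.

Lemma is01_col_perm m n (s : 'S_n) (M : 'M[Z4]_(m, n)) :
  is01 M -> is01 (col_perm s M).
Proof. by move=> M01 i j; rewrite mxE. Qed.

Lemma inB_col_perm m n (s : 'S_n) (B : 'M[Z4]_(m, n)) :
  inB B -> inB (col_perm s B).
Proof.
case=> [B02|[i [[j Bij] [B02 Bi_n3]]]]; [left|right].
  by move=> i j; rewrite mxE.
exists i; split; first by exists (s^-1 j)%g; rewrite mxE permKV.
by split=> [i' lt_i'i j'|j']; rewrite mxE //; apply: B02.
Qed.

Lemma col_perm_col_mx R m1 m2 n (s : 'S_n) (U : 'M[R]_(m1, n)) (L : 'M[R]_(m2, n)) :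
  col_perm s (col_mx U L) = col_mx (col_perm s U) (col_perm s L).
Proof.
apply/matrixP => i j; rewrite mxE.
by case: (split_ordP i) => [a ->|b ->]; rewrite ?col_mxEu ?col_mxEd mxE.
Qed.

Definition rshift_perm_fun p q (t : 'S_q) (j : 'I_(p + q)) : 'I_(p + q) :=
  unsplit (match split j with inl a => inl a | inr b => inr (t b) end).

Lemma rshift_perm_funK p q (t : 'S_q) :
  cancel (@rshift_perm_fun p q t) (@rshift_perm_fun p q t^-1%g).
Proof.
by move=> j; rewrite /rshift_perm_fun unsplitK; case: split_ordP => [a ->|b ->] //=; rewrite permK.
Qed.

Definition rshift_perm p q (t : 'S_q) : 'S_(p + q) :=
  perm (can_inj (@rshift_perm_funK p q t)).

Lemma col_perm_rshift_row_mx R m p q (t : 'S_q) (X : 'M[R]_(m, p)) (Y : 'M[R]_(m, q)) :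
  col_perm (rshift_perm p t) (row_mx X Y) = row_mx X (col_perm t Y).
Proof.
apply/matrixP => i j; rewrite mxE permE /rshift_perm_fun.
by case: split_ordP => [a ->|b ->] /=; rewrite ?row_mxEl ?row_mxEr ?mxE.
Qed.

Lemma Gmat_col_perm k1 k2 l (s : 'S_l) (A : 'M[Z4]_(k1, k2)) B D :
  Gmat A (col_perm s B) (col_perm s D) =
  col_perm (rshift_perm k1 (rshift_perm k2 s)) (Gmat A B D).
Proof. by rewrite /Gmat col_perm_col_mx !col_perm_rshift_row_mx linearZ. Qed.

Lemma code_col_perm m N (s : 'S_N) (G : 'M[Z4]_(m, N)) :
  code (col_perm s G) = [set col_perm s x | x in code G].
Proof.
have mul_col_perm v : v *m col_perm s G = col_perm s (v *m G).
  by rewrite !col_permE mulmxA.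
apply/setP => x; rewrite inE; apply/existsP/imsetP.
  case=> v /eqP ->; exists (v *m G); last exact: mul_col_perm.
  by rewrite inE; apply/existsP; exists v.
case=> y; rewrite inE => /existsP[v /eqP ->] ->.
by exists v; rewrite mul_col_perm.
Qed.

Lemma equiv_codes_col_perm m N (s : 'S_N) (G : 'M[Z4]_(m, N)) :
  equiv_codes (code G) (code (col_perm s G)).
Proof.
exists s, (fun _ => false); rewrite code_col_perm.
apply: eq_imset => x; apply/matrixP => i j.
by rewrite !mxE expr0 mul1r (ord1 i).
Qed.

Theorem mainTheorem11 (n k1 k2 : nat) (Hn : (k1 + k2 <= n)%N)
  (A : 'M[Z4]_(k1, k2)) (B : 'M[Z4]_(k1, n - k1 - k2))
  (D : 'M[Z4]_(k2, n - k1 - k2)) :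
  inU A B D ->
  exists (A' : 'M[Z4]_(k1, k2)) (B' : 'M[Z4]_(k1, n - k1 - k2))
         (D' : 'M[Z4]_(k2, n - k1 - k2)),
    inV A' B' D' /\ equiv_codes (code (Gmat A B D)) (code (Gmat A' B' D')).
Proof.
case=> A01 D01 A_sorted B_in.
have [s BD_sorted] := cols_sortable (col_mx B (2 *: D)).
exists A, (col_perm s B), (col_perm s D); split.
  split; first by split; [| exact: is01_col_perm | | exact: inB_col_perm].
  by rewrite -linearZ -col_perm_col_mx.
rewrite Gmat_col_perm; exact: equiv_codes_col_perm.
Qed.
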